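(* Fix $a\in\mathbb{C}_v$ and $r>0$, and let $F(z)=\sum_{i\ge0}c_i(z-a)^i\in\mathbb{C}_v[[z-a]]$ converge on $D(a,r)$. If $F'$ has no zeros in $D(a,r)$, then $F$ maps $D(a,\kappa r)$ bijectively onto $D(c_0,|c_1|\kappa r)$.
   Context: $\mathbb{C}_v$ is an algebraically closed field of characteristic zero, complete with respect to a nontrivial non-archimedean absolute value $|\cdot|$; $D(a,r)=\{x\in\mathbb{C}_v:|x-a|<r\}$. Let $p$ be the residue characteristic of $\mathbb{C}_v$; define $\kappa:=|p|^{1/(p-1)}$ if $p>0$ and $\kappa:=1$ if $p=0$ (so $0<\kappa\le1$). *)

From HB Require Import structures.
From mathcomp Require Import all_boot all_order all_algebra.
From mathcomp Require Import boolp reals exp.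
Set Implicit Arguments. Unset Strict Implicit. Unset Printing Implicit Defensive.
Import Order.TTheory GRing.Theory Num.Theory.
Local Open Scope ring_scope.

Record nonarch_absval (R : realType) (K : fieldType) := NonArchAbsval {
  absv :> K -> R;
  absv_ge0 : forall x, 0 <= absv x;
  absv_eq0 : forall x, absv x = 0 <-> x = 0;
  absvM : forall x y, absv (x * y) = absv x * absv y;
  absv_ultra : forall x y, absv (x + y) <= Num.max (absv x) (absv y);
  absv_nontrivial : exists x, absv x != 0 /\ absv x != 1
}.

Section Defs.
Variables (R : realType) (K : fieldType) (v : nonarch_absval R K).

Definition av_cvg (u : nat -> K) (l : K) : Prop :=
  forall e : R, 0 < e -> exists N : nat, forall n, (N <= n)%N -> v (u n - l) < e.

Definition av_cauchy (u : nat -> K) : Prop :=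
  forall e : R, 0 < e -> exists N : nat, forall m n, (N <= m)%N -> (N <= n)%N ->
    v (u m - u n) < e.

Definition av_complete : Prop :=
  forall u, av_cauchy u -> exists l, av_cvg u l.

Definition disc (a : K) (r : R) : K -> Prop := fun x => v (x - a) < r.

Definition psum (c : nat -> K) (a z : K) (n : nat) : K :=
  \sum_(i < n) c i * (z - a) ^+ i.

(* coefficients of the formal derivative: F'(z) = sum_i (i+1) c_{i+1} (z-a)^i *)
Definition dcoef (c : nat -> K) (i : nat) : K := (i.+1)%:R * c i.+1.

(* residue characteristic p > 0 exists iff |p| < 1 for some prime p *)
Definition resp_spec (p : nat) : Prop := prime p /\ v p%:R < 1.

Definition kappa : R :=
  match pselect (exists p, resp_spec p) with
  | left H => let p := projT1 (cid H) in
              powR (v p%:R) (1 / (p.-1)%:R)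
  | right _ => 1
  end.

End Defs.

From HB Require Import structures.
From mathcomp Require Import all_boot all_order all_algebra.
From mathcomp Require Import boolp reals exp.
From mathcomp.algebra_tactics Require Import ring lra.
From mathcomp Require Import zify.
Set Implicit Arguments. Unset Strict Implicit. Unset Printing Implicit Defensive.
Import Order.TTheory GRing.Theory Num.Theory.
Local Open Scope ring_scope.

(* Recentring at a, write G(x) = F(x + a) = sum_i c_i x^i.  The proof has
   three independent ingredients, developed in this order:
   1. Zeros of power series (a Newton polygon argument): if sum_i b_i x^i
      converges on the closed disc |x| <= s and some term |b_i| s^i exceeds
      |b_0|, the series has a zero there.  The zeros of the truncations are
      located by factoring them over the algebraically closed K and bounding
      Gauss norms; a Cauchy sequence of such zeros converges to a zero.
   2. Arithmetic of kappa: |i| >= kappa^(i-1) for i > 0, and the value group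
      of K is dense in (0, +oo).
   3. Nearly linear series: if |c_i| rho^(i-1) <= th |c_1| for i >= 2 with
      th < 1, then |G(y) - G(x) - c_1 (y - x)| <= th |c_1| |y - x| on the
      closed disc of radius rho; so G is injective there, maps D(0, r1) into
      D(c_0, |c_1| r1), and Newton's iteration x |-> x + (w - G x) / c_1
      converges to a preimage of any w in D(c_0, |c_1| r1).
   Applying 1 to G' gives |i c_i| s^(i-1) <= |c_1| for all s < r; with 2 this
   yields the domination hypothesis of 3 for every rho < kappa r. *)

Lemma lerXn2r_nn (R : realDomainType) (x y : R) n :
  0 <= x -> x <= y -> x ^+ n <= y ^+ n.
Proof. by move=> x0 xy; apply: lerXn2r; rewrite // nnegrE (le_trans x0 xy). Qed.

Section Absval.
Variables (R : realType) (K : fieldType) (v : nonarch_absval R K).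

Lemma v0 : v 0 = 0. Proof. exact/(absv_eq0 v). Qed.

Lemma v_neq0 x : x != 0 -> 0 < v x.
Proof.
move=> hx; rewrite lt_def absv_ge0 andbT; apply/eqP => /(absv_eq0 v) /eqP.
by rewrite (negPf hx).
Qed.

Lemma v1 : v 1 = 1.
Proof.
have h1 : v 1 != 0 by rewrite gt_eqF // v_neq0 ?oner_eq0.
by apply: (mulfI h1); rewrite -absvM !mulr1.
Qed.

Lemma vN x : v (- x) = v x.
Proof.
have vN1 : v (-1) = 1.
  have h : v (-1) * v (-1) = 1 by rewrite -absvM mulrNN mulr1 v1.
  have := absv_ge0 v (-1); nra.
by rewrite -mulN1r absvM vN1 mul1r.
Qed.

Lemma vB x y : v (x - y) = v (y - x).
Proof. by rewrite -vN opprB. Qed.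

Lemma vX x n : v (x ^+ n) = v x ^+ n.
Proof. by elim: n => [|n IH]; rewrite ?expr0 ?v1 // !exprS absvM IH. Qed.

Lemma vV x : v x^-1 = (v x)^-1.
Proof.
have [->|hx] := eqVneq x 0; first by rewrite invr0 v0 invr0.
apply: (mulfI (lt0r_neq0 (v_neq0 hx))).
by rewrite -absvM !mulfV ?v1 ?gt_eqF ?v_neq0.
Qed.

Lemma v_div x y : v (x / y) = v x / v y.
Proof. by rewrite absvM vV. Qed.

Lemma vD_le x y B : v x <= B -> v y <= B -> v (x + y) <= B.
Proof. by move=> hx hy; apply: le_trans (absv_ultra v x y) _; rewrite ge_max hx hy. Qed.

Lemma vD_lt x y B : v x < B -> v y < B -> v (x + y) < B.
Proof. by move=> hx hy; apply: le_lt_trans (absv_ultra v x y) _; rewrite gt_max hx hy. Qed.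

Lemma vD_dom x y : v y < v x -> v (x + y) = v x.
Proof.
move=> h; apply/eqP; rewrite eq_le; apply/andP; split.
  by apply: vD_le => //; exact: ltW.
have := absv_ultra v (x + y) (- y); rewrite addrK vN le_max.
by case/orP => // hh; move: (le_lt_trans hh h); rewrite ltxx.
Qed.

Lemma v_nat n : v n%:R <= 1.
Proof.
elim: n => [|n IH]; first by rewrite v0.
by rewrite -natr1; apply: vD_le; rewrite ?v1.
Qed.

Lemma v_sum (I : Type) (s : seq I) (P : pred I) (f : I -> K) B : 0 <= B ->
  (forall i, P i -> v (f i) <= B) -> v (\sum_(i <- s | P i) f i) <= B.
Proof.
move=> B0 h; elim/big_rec: _ => [|i x Pi hx]; first by rewrite v0.
exact: vD_le (h i Pi) hx.
Qed.

Lemma v_sum_lt (I : Type) (s : seq I) (P : pred I) (f : I -> K) B : 0 < B ->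
  (forall i, P i -> v (f i) < B) -> v (\sum_(i <- s | P i) f i) < B.
Proof.
move=> B0 h; elim/big_rec: _ => [|i x Pi hx]; first by rewrite v0.
exact: vD_lt (h i Pi) hx.
Qed.

Lemma v_prod (I : Type) (s : seq I) (f : I -> K) :
  v (\prod_(i <- s) f i) = \prod_(i <- s) v (f i).
Proof. by elim: s => [|i s IH]; rewrite ?big_nil ?v1 // !big_cons absvM IH. Qed.

Lemma v_eq0_small x : (forall e, 0 < e -> v x < e) -> x = 0.
Proof.
move=> h; apply/eqP; apply/negPn/negP => /v_neq0 hx.
by have := h _ hx; rewrite ltxx.
Qed.

Lemma lim_le u l y B N : av_cvg v u l ->
  (forall n, (N <= n)%N -> v (u n - y) <= B) -> v (l - y) <= B.
Proof.
move=> hc hb; rewrite leNgt; apply/negP => hlt.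
have B0 : 0 <= B := le_trans (absv_ge0 v _) (hb N (leqnn N)).
have [N' hN'] := hc _ (le_lt_trans B0 hlt).
pose n := maxn N N'.
have el : l - y = - (u n - l) + (u n - y) by rewrite opprB addrA subrK.
have h1 : v (- (u n - l)) < v (l - y) by rewrite vN; exact/hN'/leq_maxr.
have h2 : v (u n - y) < v (l - y) := le_lt_trans (hb n (leq_maxl _ _)) hlt.
by have := vD_lt h1 h2; rewrite -el ltxx.
Qed.

Lemma cvg_uniq u l1 l2 : av_cvg v u l1 -> av_cvg v u l2 -> l1 = l2.
Proof.
move=> h1 h2; apply/eqP; rewrite -subr_eq0; apply/eqP/v_eq0_small => e e0.
have e2 : 0 < e / 2 by lra.
have [N hN] := h2 _ e2.
have := lim_le (y := l2) (B := e / 2) h1 (fun n hn => ltW (hN n hn)).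
by move=> /le_lt_trans; apply; lra.
Qed.

Lemma cvgB u1 u2 l1 l2 : av_cvg v u1 l1 -> av_cvg v u2 l2 ->
  av_cvg v (fun n => u1 n - u2 n) (l1 - l2).
Proof.
move=> h1 h2 e e0; have [N1 H1] := h1 e e0; have [N2 H2] := h2 e e0.
exists (maxn N1 N2) => n; rewrite geq_max => /andP[n1 n2].
have -> : u1 n - u2 n - (l1 - l2) = (u1 n - l1) - (u2 n - l2) by ring.
by apply: vD_lt; rewrite ?vN; [exact: H1 | exact: H2].
Qed.

(* Ultrametric Cauchy criterion: successive differences tending to 0 suffice. *)
Lemma cauchy_of_steps (A : nat -> K) :
  (forall e, 0 < e -> exists N, forall k, (N <= k)%N -> v (A k.+1 - A k) < e) ->
  av_cauchy v A.
Proof.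
move=> small e e0; have [N hN] := small e e0.
have far : forall n j, (N <= n)%N -> v (A (n + j)%N - A n) < e.
  move=> n; elim=> [|j IH] Nn; first by rewrite addn0 subrr v0.
  rewrite addnS -(subrK (A (n + j)%N) (A (n + j).+1)) -addrA.
  by apply: vD_lt (IH Nn); apply: hN; exact: leq_trans Nn (leq_addr _ _).
exists N => m n Nm Nn; have [nm|mn] := leqP n m; first by rewrite -(subnKC nm); exact: far.
by rewrite vB -(subnKC (ltnW mn)); exact: far.
Qed.

(* Partial sums of the power series sum_i b_i x^i centred at 0;
   the partial sums psum c a z of the statement are, by definition, ps c (z - a). *)
Definition ps (b : nat -> K) (x : K) (n : nat) : K := \sum_(i < n) b i * x ^+ i.

Lemma ps_S b x n : ps b x n.+1 = ps b x n + b n * x ^+ n.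
Proof. by rewrite /ps big_ord_recr. Qed.

Lemma ps_split b x n m : (n <= m)%N ->
  ps b x m - ps b x n = \sum_(n <= i < m) b i * x ^+ i.
Proof.
move=> nm; rewrite /ps -!(big_mkord xpredT (fun i => b i * x ^+ i)).
by rewrite (big_cat_nat (n := n)) //= addrAC subrr add0r.
Qed.

Lemma ps_at0 b n : ps b 0 n.+1 = b 0%N.
Proof.
rewrite /ps big_ord_recl expr0 mulr1 big1 ?addr0 // => i _.
by rewrite expr0n mulr0.
Qed.

Lemma terms_of_cvg b x l : av_cvg v (ps b x) l ->
  forall e, 0 < e -> exists N, forall n, (N <= n)%N -> v (b n) * v x ^+ n < e.
Proof.
move=> h e e0; have [N hN] := h e e0; exists N => n nN.
have -> : v (b n) * v x ^+ n = v ((ps b x n.+1 - l) - (ps b x n - l)).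
  by rewrite ps_S -vX -absvM; congr (v _); ring.
by apply: vD_lt; rewrite ?vN; apply: hN => //; exact: leqW.
Qed.

Lemma v_subXX x y s i : v x <= s -> v y <= s ->
  v (x ^+ i - y ^+ i) <= v (x - y) * s ^+ i.-1.
Proof.
move=> xs ys; have s0 := le_trans (absv_ge0 v x) xs.
rewrite subrXX absvM; apply: ler_wpM2l; first exact: absv_ge0.
apply: v_sum; first exact: exprn_ge0.
move=> j _; rewrite absvM !vX.
have ji : (j <= i.-1)%N by rewrite -ltnS; case: i j => [[]|i j] //=.
have -> : s ^+ i.-1 = s ^+ (i.-1 - j) * s ^+ j by rewrite -exprD subnK.
by apply: ler_pM; rewrite ?exprn_ge0 ?absv_ge0 //; apply: lerXn2r_nn; rewrite ?absv_ge0.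
Qed.

End Absval.

Section RealFacts.
Variable R : realType.

Lemma bernoulli (h : R) n : 0 <= h -> 1 + n%:R * h <= (1 + h) ^+ n.
Proof.
move=> h0; elim: n => [|n IH]; first by rewrite mul0r addr0 expr0.
rewrite exprS -natr1.
have hn : 0 <= n%:R * h :> R by rewrite mulr_ge0.
have : (1 + n%:R * h) * (1 + h) <= (1 + h) * (1 + h) ^+ n.
  by rewrite mulrC; apply: ler_wpM2l => //; lra.
nra.
Qed.

Lemma geo_small (th e : R) : 0 <= th -> th < 1 -> 0 < e -> exists n, th ^+ n < e.
Proof.
move=> th0 th1 e0; have [->|thn0] := eqVneq th 0; first by exists 1%N; rewrite expr1.
have thp : 0 < th by rewrite lt_def thn0 th0.
pose h := th^-1 - 1.
have hp : 0 < h by rewrite subr_gt0 invf_gt1.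
have eh : 0 < e * h by rewrite mulr_gt0.
pose n := Num.Def.archi_bound (e * h)^-1.
have hn : 1 < e * h * n%:R.
  have hb : (e * h)^-1 < n%:R by apply: archi_boundP; rewrite invr_ge0 ltW.
  by rewrite -(ltr_pM2l eh) mulfV ?gt_eqF in hb.
exists n.
have thn : 0 < th ^+ n by rewrite exprn_gt0.
have bern : 1 + n%:R * h <= (th ^+ n)^-1.
  rewrite -exprVn (_ : th^-1 = 1 + h); first exact: bernoulli (ltW hp).
  by rewrite /h addrC subrK.
have := ler_wpM2l (ltW thn) bern; rewrite mulfV ?lt0r_neq0 // => bern'.
have hn0 : 0 <= n%:R * h by rewrite mulr_ge0 ?ltW.
nra.
Qed.

Lemma geo_small_mul (th A e : R) : 0 <= th -> th < 1 -> 0 <= A -> 0 < e ->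
  exists N, forall n, (N <= n)%N -> th ^+ n * A < e.
Proof.
move=> th0 th1 A0 e0; have A1 : 0 < A + 1 by lra.
have [N hN] := geo_small th0 th1 (divr_gt0 e0 A1); exists N => n Nn.
have thn : th ^+ n <= th ^+ N by apply: ler_wiXn2l => //; exact: ltW.
rewrite ltr_pdivlMr // in hN; apply: le_lt_trans hN.
by apply: ler_pM; rewrite ?exprn_ge0 //; lra.
Qed.

Lemma pow_between (la lo hi : R) : 0 < la -> la < 1 -> 0 <= lo -> lo < la * hi ->
  hi <= 1 -> exists m, lo < la ^+ m /\ la ^+ m < hi.
Proof.
move=> la0 la1 lo0 lohi hi1.
have hi0 : 0 < hi by rewrite -(pmulr_rgt0 _ la0); exact: le_lt_trans lohi.
have ex : exists m, la ^+ m < hi by apply: geo_small; rewrite ?ltW.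
case: (ex_minnP ex) => m hm hmin; exists m; split => //.
have m0 : (0 < m)%N.
  by rewrite lt0n; apply/eqP => m0; move: hm; rewrite m0 expr0 ltNge hi1.
have hm1 : hi <= la ^+ m.-1.
  by rewrite leNgt; apply/negP => /hmin; rewrite -ltnS prednK // ltnn.
by rewrite -(prednK m0) exprS; exact: lt_le_trans lohi (ler_wpM2l (ltW la0) hm1).
Qed.

Lemma fin_max (t : nat -> R) N :
  exists2 j, (j <= N)%N & forall k, (k <= N)%N -> t k <= t j.
Proof.
elim: N => [|N [j hj hk]]; first by exists 0%N => // k; rewrite leqn0 => /eqP ->.
have [le|lt] := leP (t N.+1) (t j).
  exists j => [|k]; first exact: leqW.
  by rewrite leq_eqVlt => /orP[/eqP ->|/hk] //.
exists N.+1 => // k; rewrite leq_eqVlt => /orP[/eqP ->//|/hk /le_trans]; apply.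
exact: ltW.
Qed.

Lemma dominant_index (t : nat -> R) :
  (forall e, 0 < e -> exists N, forall n, (N <= n)%N -> t n < e) ->
  0 <= t 0%N -> (exists i, t 0%N < t i) ->
  exists D, [/\ (0 < D)%N, forall k, t k <= t D & forall k, (D < k)%N -> t k < t D].
Proof.
move=> small t00 [i0 hi0].
have [N hN] := small _ (le_lt_trans t00 hi0).
have i0N : (i0 <= N)%N by rewrite leqNgt; apply/negP => /ltnW /hN; rewrite ltxx.
have [j jN hj] := fin_max t N.
have tmax k : t k <= t j.
  have [kN|Nk] := leqP k N; first exact: hj.
  exact/ltW/(lt_le_trans (hN k (ltnW Nk)))/hj.
have bound k : t k == t j -> (k <= N)%N.
  by move=> /eqP tk; rewrite leqNgt; apply/negP => /ltnW /hN; rewrite tk ltNge hj.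
have [D /eqP tD maxD] := ex_maxnP (ex_intro _ j (eqxx (t j))) bound.
exists D; rewrite tD; split => // [|k Dk].
  rewrite lt0n; apply/eqP => D0; move: hi0; rewrite -D0 tD.
  by rewrite ltNge tmax.
rewrite lt_def tmax andbT eq_sym; apply: contraTN Dk => tk.
by rewrite -leqNgt (maxD k tk).
Qed.

End RealFacts.

Section GaussNorm.
Variables (R : realType) (K : fieldType) (v : nonarch_absval R K).

(* gauss_le t B p : the Gauss norm max_k |p_k| t^k of p is at most B. *)
Definition gauss_le (t B : R) (p : {poly K}) := forall k, v p`_k * t ^+ k <= B.

Lemma gauss_le_mul t B1 B2 p q : 0 <= t -> 0 <= B1 -> 0 <= B2 ->
  gauss_le t B1 p -> gauss_le t B2 q -> gauss_le t (B1 * B2) (p * q).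
Proof.
move=> t0 B10 B20 hp hq k; rewrite coefM.
have [tk0|tk] := eqVneq (t ^+ k) 0; first by rewrite tk0 mulr0 mulr_ge0.
have tkp : 0 < t ^+ k by rewrite lt_def tk exprn_ge0.
rewrite -ler_pdivlMr //; apply: v_sum; first by rewrite divr_ge0 ?mulr_ge0 ?exprn_ge0.
move=> j _; rewrite ler_pdivlMr // absvM.
have jk : (j <= k)%N by rewrite -ltnS.
have -> : t ^+ k = t ^+ j * t ^+ (k - j) by rewrite -exprD subnKC.
rewrite mulrACA.
by apply: ler_pM; rewrite ?mulr_ge0 ?absv_ge0 ?exprn_ge0.
Qed.

Lemma gauss_le_XsubC t g : 0 <= t -> t <= v g -> gauss_le t (v g) ('X - g%:P).
Proof.
move=> t0 tg [|[|k]]; rewrite coefB coefX coefC /=.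
- by rewrite sub0r vN expr0 mulr1.
- by rewrite subr0 v1 mul1r expr1.
- by rewrite subr0 v0 mul0r absv_ge0.
Qed.

Lemma gauss_le_prod_XsubC t (s : seq K) : 0 <= t -> (forall g, g \in s -> t <= v g) ->
  gauss_le t (\prod_(g <- s) v g) (\prod_(g <- s) ('X - g%:P)).
Proof.
move=> t0; elim: s => [|g s IH] hs.
  by rewrite !big_nil => -[|k]; rewrite coefC /= ?v1 ?expr0 ?mulr1 // v0 mul0r.
rewrite !big_cons; apply: gauss_le_mul; rewrite ?absv_ge0 //.
- by apply: prodr_ge0 => i _; apply: absv_ge0.
- by apply: gauss_le_XsubC => //; apply: hs; rewrite mem_head.
- by apply: IH => h hh; apply: hs; rewrite inE hh orbT.
Qed.

Lemma taylor_coef (p : {poly K}) (a : K) k : (p \Po ('X + a%:P))`_k = p^`N(k).[a].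
Proof.
elim/poly_ind: p k => [|p c IH] k.
  by rewrite comp_poly0 coef0 (@nderivn_poly0 _ (0 : {poly K}) k) ?horner0 // size_poly0.
rewrite comp_poly_MXaddC mulrDr coefD coefD coefMX coefMC coefC.
case: k => [|k] /=; first by rewrite add0r nderivn0 hornerMXaddC IH nderivn0.
by rewrite addr0 nderivnMXaddC hornerD hornerMX !IH.
Qed.

Lemma dominant_coef_gt0 (P : {poly K}) s D : 0 < s ->
  (forall i, (D < i)%N -> v P`_i * s ^+ i < v P`_D * s ^+ D) -> 0 < v P`_D.
Proof.
move=> s0 dom.
have : 0 < v P`_D * s ^+ D.
  by apply: le_lt_trans (dom D.+1 (ltnSn D)); rewrite mulr_ge0 ?absv_ge0 ?exprn_ge0 ?ltW.
by rewrite pmulr_lgt0 // exprn_gt0.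
Qed.

Lemma taylor_coef_dominant (P : {poly K}) a s D : 0 < s -> v a <= s ->
  (forall i, (D < i)%N -> v P`_i * s ^+ i < v P`_D * s ^+ D) ->
  v (P \Po ('X + a%:P))`_D = v P`_D.
Proof.
move=> s0 a_s dom.
have sD : 0 < s ^+ D by rewrite exprn_gt0.
have PD := dominant_coef_gt0 s0 dom.
rewrite taylor_coef (horner_coef_wide _ (leqnSn (size (P^`N(D))))) big_ord_recl.
rewrite coef_nderivn addn0 binn mulr1n expr0 mulr1 vD_dom //.
apply: v_sum_lt => // j _; rewrite coef_nderivn /= -mulr_natr !absvM vX.
rewrite -(ltr_pM2r sD); apply: le_lt_trans (dom (D + j.+1)%N _); last first.
  by rewrite -addSnnS leq_addr.
rewrite exprD -!mulrA; apply: ler_wpM2l; first exact: absv_ge0.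
rewrite mulrA [X in _ <= X]mulrC; apply: ler_wpM2r; first exact: ltW.
rewrite -[X in _ <= X]mul1r.
apply: ler_pM; rewrite ?absv_ge0 ?exprn_ge0 ?v_nat ?absv_ge0 //.
exact: lerXn2r_nn (absv_ge0 v a) a_s.
Qed.

End GaussNorm.

Section PolyRoots.
Variables (R : realType) (K : closedFieldType) (v : nonarch_absval R K).

Lemma seq_argmin (T : eqType) (s : seq T) (f : T -> R) : s != [::] ->
  exists2 b, b \in s & forall g, g \in s -> f b <= f g.
Proof.
elim: s => [|g s IH] // _; have [->|/IH [b bs hb]] := eqVneq s [::].
  by exists g; rewrite ?mem_head // => h; rewrite inE => /eqP ->.
have [le|lt] := leP (f g) (f b).
  exists g => [|h]; first exact: mem_head.
  by rewrite inE => /orP[/eqP ->//|/hb]; exact: le_trans.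
exists b => [|h]; first by rewrite inE bs orbT.
by rewrite inE => /orP[/eqP ->|/hb //]; exact: ltW.
Qed.

(* Factor P over the algebraically closed K and let b be a root closest to a:
   every coefficient of P(X + a) satisfies |Q_k| |b - a|^k <= |P(a)|. *)
Lemma closest_root (P : {poly K}) a : (1 < size P)%N ->
  exists b, root P b /\ forall k, v (P \Po ('X + a%:P))`_k * v (b - a) ^+ k <= v P.[a].
Proof.
move=> szP; have [rs Hrs] := closed_field_poly_normal P.
have rs0 : rs != [::].
  apply/eqP => e; move: szP; rewrite Hrs e big_nil -mul_polyC mulr1 size_polyC.
  by case: (_ != 0).
have [b brs hb] := seq_argmin (fun g => v (g - a)) rs0.
exists b; split.
  rewrite /root Hrs hornerZ horner_prod (big_rem b) //= hornerXsubC subrr.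
  by rewrite mul0r mulr0.
have Pa : v P.[a] = v (lead_coef P) * \prod_(g <- rs) v (g - a).
  rewrite {1}Hrs hornerZ horner_prod absvM v_prod; congr (_ * _).
  by apply: eq_bigr => g _; rewrite hornerXsubC vB.
have -> : P \Po ('X + a%:P) = lead_coef P *: \prod_(g <- rs) ('X - (g - a)%:P).
  rewrite {1}Hrs comp_polyZ; congr (_ *: _).
  elim: (rs) => [|g s' IH]; first by rewrite !big_nil comp_polyC.
  rewrite !big_cons comp_polyM IH comp_polyB comp_polyX comp_polyC.
  by rewrite polyCB opprB addrA.
suff hQ : gauss_le v (v (b - a)) (\prod_(g <- rs) v (g - a))
    (\prod_(g <- rs) ('X - (g - a)%:P)).
  by move=> k; rewrite coefZ absvM -mulrA Pa ler_wpM2l ?absv_ge0.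
have := gauss_le_prod_XsubC (v := v) (s := [seq g - a | g <- rs]) (absv_ge0 v (b - a)).
by rewrite !big_map; apply => _ /mapP [g grs ->]; exact: hb.
Qed.

Lemma root_near (P : {poly K}) a s D : 0 < s -> (0 < D)%N -> v a <= s ->
  (forall i, (D < i)%N -> v P`_i * s ^+ i < v P`_D * s ^+ D) ->
  exists b, root P b /\ v P`_D * s ^+ D * v (b - a) ^+ D <= v P.[a] * s ^+ D.
Proof.
move=> s0 D0 a_s dom.
have PD0 : P`_D != 0.
  by apply/eqP => PD; have := dominant_coef_gt0 s0 dom; rewrite PD v0 ltxx.
have szP : (1 < size P)%N.
  apply: leq_ltn_trans D0 _; rewrite ltnNge; apply: contra PD0.
  by move=> /(nth_default 0) ->.
have [b [Pb hb]] := closest_root a szP; exists b; split => //.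
rewrite mulrAC; apply: ler_wpM2r; first by rewrite exprn_ge0 ?ltW.
by rewrite -(taylor_coef_dominant s0 a_s dom); exact: hb.
Qed.

End PolyRoots.

Lemma dep_choice_nat (T : Type) (P : nat -> T -> Prop) (Q : nat -> T -> T -> Prop) x0 :
  P 0%N x0 -> (forall n x, P n x -> exists y, P n.+1 y /\ Q n x y) ->
  exists A : nat -> T, forall n, P n (A n) /\ Q n (A n) (A n.+1).
Proof.
move=> P0 step.
have total (p : nat * T) : exists y, P p.1 p.2 -> P p.1.+1 y /\ Q p.1 p.2 y.
  have [/step [y hy]|nP] := pselect (P p.1 p.2); first by exists y.
  by exists p.2.
have [g hg] := choice total.
pose A := fix A n := if n is n'.+1 then g (n', A n') else x0.
have PA n : P n (A n) by elim: n => //= n /(hg (n, A n)) [].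
by exists A => n; split; last exact: (hg (n, A n) (PA n)).2.
Qed.

Section SeriesZeros.
Variables (R : realType) (K : closedFieldType) (v : nonarch_absval R K).
Variables (b : nat -> K) (s : R).
Hypothesis s_gt0 : 0 < s.

Let t n := v (b n) * s ^+ n.

Lemma t_ge0 n : 0 <= t n.
Proof. by rewrite mulr_ge0 ?absv_ge0 ?exprn_ge0 ?(ltW s_gt0). Qed.

Lemma ps_lipschitz M x y n : (forall i, t i <= M) -> v x <= s -> v y <= s ->
  v (ps b x n - ps b y n) <= v (x - y) * M / s.
Proof.
move=> tM xs ys; have M0 : 0 <= M := le_trans (t_ge0 0) (tM 0%N).
have bound0 : 0 <= v (x - y) * M / s by rewrite divr_ge0 ?mulr_ge0 ?absv_ge0 ?(ltW s_gt0).
rewrite /ps -sumrB; apply: v_sum => // i _.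
rewrite -mulrBr absvM; case: (nat_of_ord i) => [|j].
  by rewrite !expr0 subrr v0 mulr0.
apply: le_trans (ler_wpM2l (absv_ge0 v _) (v_subXX j.+1 xs ys)) _.
rewrite ler_pdivlMr //=.
have -> : v (b j.+1) * (v (x - y) * s ^+ j) * s = v (x - y) * t j.+1.
  by rewrite /t exprSr; ring.
by rewrite ler_wpM2l ?absv_ge0.
Qed.

Lemma ps_tail_small e x N n : 0 < e -> (forall i, (N <= i)%N -> t i < e) ->
  v x <= s -> (N <= n)%N -> v (ps b x n - ps b x N) < e.
Proof.
move=> e0 small xs Nn; rewrite ps_split // big_nat_cond; apply: v_sum_lt => // i.
rewrite andbT => /andP[Ni _]; rewrite absvM vX.
apply: le_lt_trans (small i Ni); apply: ler_wpM2l; first exact: absv_ge0.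
by apply: lerXn2r_nn; rewrite ?absv_ge0.
Qed.

Hypothesis terms_small : forall e, 0 < e -> exists N, forall n, (N <= n)%N -> t n < e.

Lemma ps_cvg0_of_roots (A : nat -> K) (N : nat -> nat) al M :
  (forall i, t i <= M) -> (forall k, v (A k) <= s) -> (forall k, (k <= N k)%N) ->
  (forall k, ps b (A k) (N k) = 0) -> av_cvg v A al -> v al <= s ->
  av_cvg v (ps b al) 0.
Proof.
move=> tM As kN Aroot Aal als.
have M0 : 0 <= M := le_trans (t_ge0 0) (tM 0%N).
move=> e e0; have [Nt hNt] := terms_small e0.
have eM : 0 < e * s / (M + 1) by rewrite divr_gt0 ?mulr_gt0 //; lra.
have [Nk hNk] := Aal _ eM.
pose k := maxn Nt Nk; exists (N k) => n Nn.
have -> : ps b al n - 0 =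
    (ps b al n - ps b al (N k)) + (ps b al (N k) - ps b (A k) (N k)).
  by rewrite Aroot !subr0 subrK.
apply: vD_lt; last first.
  apply: le_lt_trans (ps_lipschitz _ tM als (As k)) _.
  have M1 : 0 < M + 1 by lra.
  have close : v (al - A k) * (M + 1) < e * s.
    by rewrite -ltr_pdivlMr // vB; apply: hNk; exact: leq_maxr.
  rewrite ltr_pdivrMr //; have := absv_ge0 v (al - A k); nra.
apply: ps_tail_small => // i Ni.
by apply: hNt; apply: leq_trans Ni; apply: leq_trans (kN k); exact: leq_maxl.
Qed.

Lemma dist_le_radius M D (x y : K) C : 0 < M -> C <= M ->
  M * v (x - y) ^+ D <= C * s ^+ D -> (0 < D)%N -> v (x - y) <= s.
Proof.
move=> M0 CM h D0; rewrite -(ler_pXn2r D0) ?nnegrE ?absv_ge0 ?(ltW s_gt0) //.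
rewrite -(ler_pM2l M0); apply: le_trans h _.
by apply: ler_wpM2r; rewrite ?exprn_ge0 ?(ltW s_gt0).
Qed.

Section DominantTerm.
Variable D : nat.
Hypotheses (D_gt0 : (0 < D)%N) (tmax : forall k, t k <= t D)
  (tlast : forall k, (D < k)%N -> t k < t D).

Lemma tD_gt0 : 0 < t D.
Proof. by apply: le_lt_trans (tlast (ltnSn D)); exact: t_ge0. Qed.

Lemma trunc_root_near N a : (D < N)%N -> v a <= s ->
  exists be, ps b be N = 0 /\ t D * v (be - a) ^+ D <= v (ps b a N) * s ^+ D.
Proof.
move=> DN a_s; pose P := \poly_(i < N) b i.
have Pps x : P.[x] = ps b x N by rewrite horner_poly.
have [|be [Pbe hbe]] := root_near (P := P) s_gt0 D_gt0 a_s.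
  move=> i Di; rewrite !coef_poly DN; case: ifP => _; first exact: tlast.
  by rewrite v0 mul0r; apply: le_lt_trans (tlast Di); exact: t_ge0.
by exists be; rewrite -!Pps; split; [exact/eqP | rewrite coef_poly DN in hbe].
Qed.

Lemma trunc_root_step N a : (D < N)%N -> v a <= s -> ps b a N = 0 ->
  exists be, [/\ ps b be N.+1 = 0, v be <= s & t D * v (be - a) ^+ D <= t N * s ^+ D].
Proof.
move=> DN a_s aroot; have [be [rbe hbe]] := trunc_root_near (leqW DN) a_s.
rewrite ps_S aroot add0r absvM vX in hbe.
have close : t D * v (be - a) ^+ D <= t N * s ^+ D.
  apply: le_trans hbe _; apply: ler_wpM2r; first by rewrite exprn_ge0 ?ltW.
  by apply: ler_wpM2l; rewrite ?absv_ge0 // lerXn2r_nn ?absv_ge0.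
exists be; split => //; rewrite -(subrK a be); apply: vD_le => //.
exact: (dist_le_radius tD_gt0 (tmax N) close).
Qed.

End DominantTerm.

Hypothesis Hcomplete : av_complete v.

Lemma series_root : (exists i, v (b 0%N) < t i) ->
  exists2 al, v al <= s & av_cvg v (ps b al) 0.
Proof.
move=> [i0 big]; have t0 : t 0%N = v (b 0%N) by rewrite /t expr0 mulr1.
have [|D [D0 tmax tlast]] := dominant_index terms_small (t_ge0 0).
  by exists i0; rewrite t0.
have M0 := tD_gt0 tlast.
have v0s : v 0 <= s by rewrite v0 ltW.
have [be0 [root0 close0]] := trunc_root_near D0 tlast (ltnSn D) v0s.
have be0s : v be0 <= s.
  rewrite ps_at0 in close0; rewrite -(subr0 be0).
  by apply: (dist_le_radius M0 _ close0 D0); rewrite -t0 tmax.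
pose P k x := v x <= s /\ ps b x (D.+1 + k) = 0.
pose Q k x y := t D * v (y - x) ^+ D <= t (D.+1 + k)%N * s ^+ D.
have P0 : P 0%N be0 by split; rewrite /P ?addn0.
have step k x : P k x -> exists y, P k.+1 y /\ Q k x y.
  move=> [xs xroot]; have DN : (D < D.+1 + k)%N by rewrite ltnS leq_addr.
  have [y [yroot ys close]] := trunc_root_step D0 tmax tlast DN xs xroot.
  by exists y; rewrite /P /Q addnS.
have [A hA] := dep_choice_nat P0 step.
have Acauchy : av_cauchy v A.
  apply: cauchy_of_steps => e e0.
  have [N hN] := terms_small (divr_gt0 (mulr_gt0 M0 (exprn_gt0 D e0)) (exprn_gt0 D s_gt0)).
  exists N => k Nk; have close := (hA k).2; rewrite /Q in close.
  have : t D * v (A k.+1 - A k) ^+ D < t D * e ^+ D.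
    apply: le_lt_trans close _; rewrite -ltr_pdivlMr ?exprn_gt0 //.
    by apply: hN; exact: leq_trans Nk (leq_addl _ _).
  by rewrite ltr_pM2l // ltr_pXn2r ?nnegrE ?absv_ge0 ?(ltW e0) ?lt0n ?(gtn_eqF D0).
have [al Aal] := Hcomplete Acauchy.
have als : v al <= s.
  by rewrite -(subr0 al); apply: (lim_le (N := 0%N) Aal) => n _; rewrite subr0; case: (hA n).1.
exists al => //; apply: (ps_cvg0_of_roots (N := fun k => (D.+1 + k)%N) tmax _ _ _ Aal als).
- by move=> k; case: (hA k).1.
- by move=> k; exact: leq_addl.
- by move=> k; case: (hA k).1.
Qed.

End SeriesZeros.

Section Kappa.
Variables (R : realType) (K : fieldType) (v : nonarch_absval R K).

Lemma v_nat_eq1 m : (0 < m)%N ->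
  (forall q, prime q -> (q %| m)%N -> v q%:R = 1) -> v m%:R = 1.
Proof.
elim: m {-2}m (leqnn m) => [|M IH] m mM m0 hq; first by move: mM m0; rewrite leqn0 => /eqP ->.
have [m1|m1] := leqP m 1; first by rewrite (_ : m = 1%N) ?v1 //; apply/eqP; rewrite eqn_leq m1.
have pq := pdiv_prime m1; have dq := pdiv_dvd m.
rewrite -(divnK dq) natrM absvM (hq _ pq dq) mulr1.
apply: IH.
- rewrite -ltnS; apply: leq_trans mM; apply: ltn_Pdiv => //; exact: prime_gt1.
- by rewrite divn_gt0 ?prime_gt0 // dvdn_leq.
- move=> q qp qd; apply: hq => //; apply: dvdn_trans qd _; exact: dvdn_div.
Qed.

(* At most one prime p has |p| < 1 (Bezout between two distinct primes). *)
Lemma v_prime_eq1 p q : prime p -> prime q -> p != q -> v p%:R < 1 -> v q%:R = 1.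
Proof.
move=> pp qp pq vp; apply/eqP; rewrite eq_le v_nat leNgt; apply/negP => vq.
case: (egcdnP q (prime_gt0 pp)) => km kn e _.
have g1 : gcdn p q = 1%N by apply/eqP; rewrite -/(coprime p q) prime_coprime // dvdn_prime2.
have small m n : v n%:R < 1 -> v (m * n)%:R < 1 :> R.
  by rewrite natrM absvM => vn; have := absv_ge0 v n%:R; have := v_nat v m; nra.
have e1 : (1 : K) = (km * p)%:R - (kn * q)%:R by rewrite e g1 natrD addrAC subrr add0r.
have : v (1 : K) < 1 by rewrite e1; apply: vD_lt; rewrite ?vN small.
by rewrite v1 ltxx.
Qed.

Lemma bernoulli_nat p e : (0 < p)%N -> ((p.-1 * e).+1 <= p ^ e)%N.
Proof.
move=> p0; elim: e => [|e IH]; first by rewrite muln0 expn0.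
by rewrite expnS; have := expn_gt0 p e; rewrite p0 /=; nia.
Qed.

(* kappa lies in (0, 1] and bounds |i| from below: kappa^(i-1) <= |i|.  Write
   i = p^e m with m prime to the residue characteristic p; then |m| = 1 and
   |i| = kappa^((p-1) e) with (p - 1) e <= i - 1. *)
Lemma kappa_spec : [pchar K] =i pred0 ->
  [/\ 0 < kappa v, kappa v <= 1 & forall i, (0 < i)%N -> kappa v ^+ i.-1 <= v i%:R].
Proof.
move=> char0; rewrite /kappa; case: pselect => [H|H]; last first.
  have hv i : (0 < i)%N -> v i%:R = 1.
    move=> i0; apply: v_nat_eq1 => // q qp _; apply/eqP; rewrite eq_le v_nat leNgt.
    by apply/negP => h; apply: H; exists q.
  by split => // i i0; rewrite expr1n hv.
case: (cid H) => p [pp vp] /=.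
have p1 := prime_gt1 pp.
have vp0 : 0 < v p%:R by rewrite v_neq0 // ((pcharf0P K).1 char0) -lt0n prime_gt0.
set k := powR (v p%:R) (1 / (p.-1)%:R).
have k0 : 0 < k by apply: powR_gt0.
have kp : k ^+ p.-1 = v p%:R.
  rewrite /k -powR_mulrn; last exact: ltW.
  rewrite -powRrM mul1r mulVf ?powRr1 ?(ltW vp0) //.
  by rewrite pnatr_eq0 -lt0n; case: p p1 {pp vp vp0 k k0 H}.
have k1 : k <= 1.
  rewrite leNgt; apply/negP => h; have := exprn_ege1 p.-1 (ltW h).
  by rewrite kp leNgt vp.
split => // i i0.
have [m cm ei] := pfactor_coprime pp i0.
have m0 : (0 < m)%N by move: i0; rewrite ei muln_gt0 => /andP[].
have vm : v m%:R = 1.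
  apply: v_nat_eq1 => // q qp qm; apply: (v_prime_eq1 pp qp) => //.
  by apply/eqP => epq; move: cm; rewrite epq prime_coprime // qm.
rewrite ei natrM absvM vm mul1r natrX vX -kp -exprM.
apply: ler_wiXn2l; rewrite ?(ltW k0) //.
by have := bernoulli_nat (logn p i) (prime_gt0 pp); rewrite ei; nia.
Qed.

End Kappa.

Section ValueGroup.
Variables (R : realType) (K : closedFieldType) (v : nonarch_absval R K).

Lemma exists_v_lt1 : exists y, 0 < v y /\ v y < 1.
Proof.
have [y [y0 y1]] := absv_nontrivial v.
have yp : 0 < v y by rewrite lt_def y0 absv_ge0.
have [lt|gt] := ltP (v y) 1; first by exists y.
by exists y^-1; rewrite vV invr_gt0 invf_lt1 // (lt_def 1) y1 gt.
Qed.

(* The value group of K is dense in (0, +oo): it contains |y|^(m/n) for a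
   fixed 0 < |y| < 1, using n-th roots in the algebraically closed K. *)
Lemma value_dense rho r : 0 <= rho -> rho < r -> exists x, rho < v x /\ v x < r.
Proof.
move=> rho0 rhor; have r0 : 0 < r := le_lt_trans rho0 rhor.
have [y [y0 y1]] := exists_v_lt1.
have [n hn] : exists n, (rho / r) ^+ n < v y.
  apply: geo_small y0; first exact: divr_ge0 rho0 (ltW r0).
  by rewrite ltr_pdivrMr ?mul1r.
have n0 : (0 < n)%N.
  by rewrite lt0n; apply/eqP => n0; move: hn; rewrite n0 expr0 ltNge ltW.
have [u hu] : exists u, u ^+ n = y.
  have [u hu] := @solve_monicpoly K n (fun i => if i == 0%N then y else 0) n0.
  exists u; rewrite hu; case: n n0 {hn hu} => // n _.
  by rewrite big_ord_recl /= expr0 mulr1 big1 ?addr0 // => i _; rewrite mul0r.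
pose la := v u; have la0 : 0 <= la := absv_ge0 v u.
have lan : la ^+ n = v y by rewrite /la -vX hu.
have la1 : la < 1 by rewrite -(expr_lt1 n0 la0) lan.
have rr0 : 0 <= rho / r := divr_ge0 rho0 (ltW r0).
have lap : rho / r < la by rewrite -(ltr_pXn2r n0) ?nnegrE // lan.
have la_pos : 0 < la := le_lt_trans rr0 lap.
have rV0 : 0 < r^-1 by rewrite invr_gt0.
have [N hN] := geo_small la0 la1 rV0.
have laN : 0 < la ^+ N by rewrite exprn_gt0.
have [|||m [lom mhi]] := @pow_between _ la (rho * la ^+ N) (r * la ^+ N) la_pos la1.
- exact: mulr_ge0 rho0 (ltW laN).
- by rewrite mulrA ltr_pM2r // -ltr_pdivrMr.
- by rewrite mulrC -ler_pdivlMr // mul1r ltW.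
exists (u ^+ m / u ^+ N); rewrite v_div !vX -/la.
by rewrite ltr_pdivlMr // ltr_pdivrMr.
Qed.

End ValueGroup.

Section NearlyLinearSeries.
Variables (R : realType) (K : fieldType) (v : nonarch_absval R K).
Variables (c : nat -> K) (G : K -> K) (r : R).
Hypothesis HG : forall x, v x < r -> av_cvg v (ps c x) (G x).

Definition dominated (rho th : R) :=
  forall i, (2 <= i)%N -> v (c i) * rho ^+ i.-1 <= th * v (c 1%N).

Lemma G_at0 : 0 < r -> G 0 = c 0%N.
Proof.
move=> r0; have v0r : v 0 < r by rewrite v0.
apply: (cvg_uniq (HG v0r)) => e e0; exists 1%N => n n1.
by rewrite -(prednK n1) ps_at0 subrr v0.
Qed.

Lemma G_linear_approx rho th x y : rho < r -> 0 <= th -> dominated rho th ->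
  v x <= rho -> v y <= rho ->
  v (G y - G x - c 1%N * (y - x)) <= th * v (c 1%N) * v (y - x).
Proof.
move=> rho_r th0 dom xr yr.
have hc := cvgB (HG (le_lt_trans yr rho_r)) (HG (le_lt_trans xr rho_r)).
apply: (lim_le (N := 2%N) hc) => n n2.
have -> : ps c y n - ps c x n - c 1%N * (y - x) = \sum_(2 <= i < n) c i * (y ^+ i - x ^+ i).
  have ps_nat z : ps c z n = \sum_(0 <= i < n) c i * z ^+ i by rewrite /ps big_mkord.
  rewrite !ps_nat !(big_ltn (ltnW n2)) !(big_ltn n2) /=.
  rewrite !expr0 !expr1 !mulr1 [RHS](eq_bigr (fun i => c i * y ^+ i - c i * x ^+ i)).
    by rewrite sumrB; ring.
  by move=> i _; rewrite mulrBr.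
rewrite big_nat_cond; apply: v_sum => [|i /andP[/andP[i2 _] _]].
  by rewrite !mulr_ge0 ?absv_ge0.
rewrite absvM; apply: le_trans (ler_wpM2l (absv_ge0 v _) (v_subXX i yr xr)) _.
by rewrite mulrCA [X in _ <= X]mulrC ler_wpM2l ?absv_ge0 ?dom.
Qed.

Lemma G_lipschitz rho th x y : rho < r -> 0 <= th -> th <= 1 -> dominated rho th ->
  v x <= rho -> v y <= rho -> v (G y - G x) <= v (c 1%N) * v (y - x).
Proof.
move=> rho_r th0 th1 dom xr yr.
rewrite -(subrK (c 1%N * (y - x)) (G y - G x)); apply: vD_le; last by rewrite absvM.
apply: le_trans (G_linear_approx rho_r th0 dom xr yr) _.
rewrite -mulrA ler_piMl // mulr_ge0 ?absv_ge0 //.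
Qed.

Section Newton.
Variables (w : K) (rho th : R).
Hypotheses (rho0 : 0 <= rho) (rho_r : rho < r) (th0 : 0 <= th) (th1 : th < 1)
  (dom : dominated rho th) (c1_neq0 : c 1%N != 0)
  (w_close : v (w - c 0%N) <= v (c 1%N) * rho).

Fixpoint newton n := if n is n'.+1 then newton n' + (w - G (newton n')) / c 1%N else 0.

Let C := v (w - c 0%N).
Let c1_gt0 : 0 < v (c 1%N) := v_neq0 v c1_neq0.
Let r_gt0 : 0 < r := le_lt_trans rho0 rho_r.

Lemma newton_spec n : v (newton n) <= rho /\ v (w - G (newton n)) <= th ^+ n * C.
Proof.
elim: n => [|n [Xr err]]; first by rewrite /= v0 (G_at0 r_gt0) expr0 mul1r.
have d_small : v ((w - G (newton n)) / c 1%N) <= rho.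
  rewrite v_div ler_pdivrMr // mulrC; apply: le_trans w_close.
  apply: le_trans err _; rewrite -[X in _ <= X]mul1r ler_wpM2r ?absv_ge0 //.
  by rewrite exprn_ile1 // ltW.
have Xr' : v (newton n.+1) <= rho by apply: vD_le.
split => //.
have step : newton n.+1 - newton n = (w - G (newton n)) / c 1%N.
  by rewrite /= addrAC subrr add0r.
have := G_linear_approx rho_r th0 dom Xr Xr'.
rewrite step mulrC divfK // v_div mulrAC -mulrA divfK ?lt0r_neq0 //.
have -> : G (newton n.+1) - G (newton n) - (w - G (newton n)) = - (w - G (newton n.+1)).
  by ring.
by rewrite vN exprS -mulrA => /le_trans; apply; rewrite ler_wpM2l.
Qed.

Lemma newton_step n : v (newton n.+1 - newton n) <= th ^+ n * (C / v (c 1%N)).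
Proof.
rewrite /= addrAC subrr add0r v_div mulrA ler_pdivrMr // divfK ?lt0r_neq0 //.
exact: (newton_spec n).2.
Qed.

Lemma newton_solution : av_complete v -> exists2 x, v x <= rho & G x = w.
Proof.
move=> complete; have C0 : 0 <= C := absv_ge0 v _.
have cauchy : av_cauchy v newton.
  apply: cauchy_of_steps => e e0.
  have [N hN] := geo_small_mul th0 th1 (divr_ge0 C0 (ltW c1_gt0)) e0.
  by exists N => n Nn; apply: le_lt_trans (newton_step n) (hN n Nn).
have [x Xx] := complete _ cauchy.
have xr : v x <= rho.
  by rewrite -(subr0 x); apply: (lim_le (N := 0%N) Xx) => n _; rewrite subr0; case: (newton_spec n).
exists x => //; apply/eqP; rewrite eq_sym -subr_eq0; apply/eqP/v_eq0_small => e e0.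
have [N1 hN1] := geo_small_mul th0 th1 C0 e0.
have [N2 hN2] := Xx _ (divr_gt0 e0 c1_gt0).
pose n := maxn N1 N2; have [Xr err] := newton_spec n.
have -> : w - G x = (w - G (newton n)) + (G (newton n) - G x) by rewrite addrA subrK.
apply: vD_lt; first exact: le_lt_trans err (hN1 n (leq_maxl _ _)).
apply: le_lt_trans (G_lipschitz rho_r th0 (ltW th1) dom xr Xr) _.
by rewrite mulrC -ltr_pdivlMr //; apply: hN2; exact: leq_maxr.
Qed.

End Newton.

Section Bijection.
Variable r1 : R.
Hypotheses (r1_le : r1 <= r) (c1_neq0 : c 1%N != 0)
  (Hdom : forall rho, 0 <= rho -> rho < r1 -> exists2 th, 0 <= th /\ th < 1 & dominated rho th).

Let c1_gt0 : 0 < v (c 1%N) := v_neq0 v c1_neq0.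

Lemma G_maps_into x : v x < r1 -> v (G x - c 0%N) < v (c 1%N) * r1.
Proof.
move=> xr; have xr' := lt_le_trans xr r1_le.
have [th [th0 th1] dom] := Hdom (absv_ge0 v x) xr.
have v0x : v 0 <= v x by rewrite v0 absv_ge0.
have := G_lipschitz xr' th0 (ltW th1) dom v0x (lexx (v x)).
rewrite G_at0 ?subr0; last exact: le_lt_trans (absv_ge0 v x) xr'.
by move=> /le_lt_trans; apply; rewrite ltr_pM2l.
Qed.

Lemma G_injective x y : v x < r1 -> v y < r1 -> G x = G y -> x = y.
Proof.
move=> xr yr Gxy; pose rho := Num.max (v x) (v y).
have rho_r1 : rho < r1 by rewrite gt_max xr yr.
have xrho : v x <= rho by rewrite le_max lexx.
have yrho : v y <= rho by rewrite le_max lexx orbT.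
have [th [th0 th1] dom] := Hdom (le_trans (absv_ge0 v x) xrho) rho_r1.
have := G_linear_approx (lt_le_trans rho_r1 r1_le) th0 dom xrho yrho.
rewrite Gxy subrr sub0r vN absvM -mulrA => contract.
apply/eqP; rewrite eq_sym -subr_eq0; apply/negPn/negP => /(v_neq0 v) d0.
have : 0 < v (c 1%N) * v (y - x) by rewrite mulr_gt0.
nra.
Qed.

Lemma G_onto w : av_complete v -> v (w - c 0%N) < v (c 1%N) * r1 ->
  exists2 x, v x < r1 & G x = w.
Proof.
move=> complete wc; pose C := v (w - c 0%N) / v (c 1%N).
have C0 : 0 <= C by rewrite divr_ge0 ?absv_ge0 ?ltW.
have Cr1 : C < r1 by rewrite ltr_pdivrMr // mulrC.
pose rho := (C + r1) / 2.
have rho0 : 0 <= rho by rewrite /rho; lra.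
have rho_r1 : rho < r1 by rewrite /rho; lra.
have w_close : v (w - c 0%N) <= v (c 1%N) * rho.
  by rewrite mulrC -ler_pdivrMr // -/C /rho; lra.
have [th [th0 th1] dom] := Hdom rho0 rho_r1.
have [x xr Gx] := newton_solution rho0 (lt_le_trans rho_r1 r1_le) th0 th1 dom c1_neq0 w_close complete.
by exists x; first exact: le_lt_trans xr rho_r1.
Qed.

End Bijection.

End NearlyLinearSeries.

Section ZeroFreeDerivative.
Variables (R : realType) (K : closedFieldType) (v : nonarch_absval R K).
Hypothesis Hcomplete : av_complete v.
Variables (c : nat -> K) (G : K -> K) (r : R).
Hypotheses (HG : forall x, v x < r -> av_cvg v (ps c x) (G x))
  (HG' : forall x, v x < r -> ~ av_cvg v (ps (dcoef c) x) 0).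

(* G'(0) = c_1 is nonzero. *)
Lemma linear_coef_neq0 : 0 < r -> c 1%N != 0.
Proof.
move=> r0; apply/eqP => c10; have v0r : v 0 < r by rewrite v0.
apply: (HG' v0r) => e e0; exists 1%N => n n1.
by rewrite -(prednK n1) ps_at0 /dcoef c10 mulr0 subrr v0.
Qed.

(* Since G' has no zero in D(0, r), on each circle |x| = s < r no term of G'
   exceeds its constant term c_1 (otherwise series_root yields a zero). *)
Lemma dcoef_bound x i : 0 < v x -> v x < r -> v (dcoef c i) * v x ^+ i <= v (c 1%N).
Proof.
move=> x0 xr; rewrite leNgt; apply/negP => big.
have small e : 0 < e -> exists N, forall n, (N <= n)%N -> v (dcoef c n) * v x ^+ n < e.
  move=> e0; have [N hN] := terms_of_cvg (HG xr) (mulr_gt0 e0 x0).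
  exists N => n Nn; have := hN n.+1 (leqW Nn); rewrite exprSr mulrA ltr_pM2r //.
  apply: le_lt_trans; rewrite /dcoef absvM ler_wpM2r ?exprn_ge0 ?absv_ge0 //.
  by rewrite ler_piMl ?absv_ge0 ?v_nat.
have [|al als] := series_root x0 small Hcomplete.
  by exists i; rewrite /dcoef mul1r.
exact: HG' (le_lt_trans als xr).
Qed.

(* Below kappa r the terms of degree >= 2 are dominated by the linear one:
   choosing s = |x| < r with rho < kappa s, and th = rho / (kappa s), we get
   |c_i| rho^(i-1) <= th^(i-1) |i c_i| s^(i-1) <= th |c_1|. *)
Lemma dominated_below_kappa rho : [pchar K] =i pred0 -> 0 <= rho -> rho < kappa v * r ->
  exists2 th, 0 <= th /\ th < 1 & dominated v c rho th.
Proof.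
move=> char0 rho0 rho_kr; have [k0 _ kb] := kappa_spec v char0.
set k := kappa v in k0 kb rho_kr *.
have [|x [rx xr]] := value_dense v (divr_ge0 rho0 (ltW k0)) (_ : rho / k < r).
  by rewrite ltr_pdivrMr // mulrC.
have x0 : 0 < v x := le_lt_trans (divr_ge0 rho0 (ltW k0)) rx.
have ks0 : 0 < k * v x by rewrite mulr_gt0.
pose th := rho / (k * v x).
have th0 : 0 <= th := divr_ge0 rho0 (ltW ks0).
have th1 : th < 1 by rewrite ltr_pdivrMr // mul1r mulrC -ltr_pdivrMr.
exists th => // i i2; have i0 : (0 < i)%N := ltnW i2.
have hI := dcoef_bound i.-1 x0 xr; rewrite /dcoef prednK // absvM in hI.
have key : v (c i) * (k * v x) ^+ i.-1 <= v (c 1%N).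
  apply: le_trans hI; rewrite exprMn mulrA ler_wpM2r ?exprn_ge0 ?absv_ge0 //.
  by rewrite mulrC ler_wpM2r ?absv_ge0 ?kb.
have thi : th ^+ i.-1 <= th by rewrite -[leRHS]expr1 ler_wiXn2l ?(ltW th1) // -ltnS prednK.
have -> : rho = th * (k * v x) by rewrite divfK ?lt0r_neq0.
rewrite exprMn mulrCA; apply: ler_pM => //; first exact: exprn_ge0.
by rewrite mulr_ge0 ?absv_ge0 ?exprn_ge0 ?(ltW ks0).
Qed.

End ZeroFreeDerivative.

Theorem lemma4p2 (R : realType) (K : closedFieldType)
  (v : nonarch_absval R K)
  (Hchar0 : [pchar K] =i pred0)
  (Hcomplete : av_complete v)
  (a : K) (r : R) (hr : 0 < r)
  (c : nat -> K) (F : K -> K)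
  (HF : forall z, disc v a r z -> av_cvg v (psum c a z) (F z))
  (HF' : forall z, disc v a r z -> ~ av_cvg v (psum (dcoef c) a z) 0) :
  (forall z, disc v a (kappa v * r) z ->
     disc v (c 0%N) (v (c 1%N) * kappa v * r) (F z)) /\
  (forall z1 z2, disc v a (kappa v * r) z1 -> disc v a (kappa v * r) z2 ->
     F z1 = F z2 -> z1 = z2) /\
  (forall w, disc v (c 0%N) (v (c 1%N) * kappa v * r) w ->
     exists2 z, disc v a (kappa v * r) z & F z = w).
Proof.
pose G x := F (x + a).
have HG x : v x < r -> av_cvg v (ps c x) (G x).
  by move=> xr; have := HF (x + a); rewrite /disc /psum addrK; apply.
have HG' x : v x < r -> ~ av_cvg v (ps (dcoef c) x) 0.
  by move=> xr; have := HF' (x + a); rewrite /disc /psum addrK; apply.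
have [_ k1 _] := kappa_spec v Hchar0.
have kr : kappa v * r <= r := ler_piMl (ltW hr) k1.
have c1 := linear_coef_neq0 HG' hr.
have dom rho := dominated_below_kappa Hcomplete HG HG' (rho := rho) Hchar0.
split; [|split].
- move=> z zr; have := G_maps_into HG kr c1 dom zr.
  by rewrite /G subrK mulrA.
- move=> z1 z2 z1r z2r Fz; rewrite -(subrK a z1) -(subrK a z2).
  by congr (_ + a); apply: (G_injective HG kr c1 dom z1r z2r); rewrite /G !subrK.
- move=> w; rewrite /disc -mulrA => wr.
  have [x xr Gx] := G_onto HG kr c1 dom Hcomplete wr.
  by exists (x + a); rewrite /disc ?addrK.
Qed.
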